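(* Let $\xi=e^{i\pi/5}$, $\tau=\frac{1+\sqrt5}{2}$, $\tau'=\frac{1-\sqrt5}{2}$, and for $n\in\mathbb{N}$ let $Q_2(n)=\{\sum_{j=0}^9 n_j\xi^j: n_j\in\mathbb{N}_0,\ \sum_j n_j\le n\}$. Let $M=\{(x_1+\tau x_2)+(x_3+\tau x_4)\xi^4: x_i\in\mathbb{Z}\}$ and define $*:M\to\mathbb{C}$ by $\big((x_1+\tau x_2)+(x_3+\tau x_4)\xi^4\big)^*=(x_1+\tau' x_2)+(x_3+\tau' x_4)\xi^8$. Let $D(n)$ be the closed convex hull of the regular decagon with vertices $n\xi^j$, $j=0,\dots,9$, and $\Sigma(D(n))=\{x\in M: x^*\in D(n)\}$. Then $Q_2(n)\subset\Sigma(D(n))\cap D(n)$.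
   Context: $M=\mathbb{Z}[\tau]\{\xi^j\}$ is the $\mathbb{Z}[\tau]$-span of the tenth roots of unity, and $\Sigma(D(n))$ is the two-dimensional cut-and-project quasicrystal with acceptance window $D(n)$. *)

From Stdlib Require Import Reals List ZArith.
From Coquelicot Require Import Coquelicot.
Import ListNotations.
Open Scope R_scope.

Fixpoint Cpow (z : C) (k : nat) : C :=
  match k with
  | O => RtoC 1
  | S k' => Cmult z (Cpow z k')
  end.

Definition xi : C := (cos (PI / 5), sin (PI / 5)).

Definition tau : R := (1 + sqrt 5) / 2.
Definition tau' : R := (1 - sqrt 5) / 2.

Definition Csum10 (f : nat -> C) : C :=
  fold_right Cplus (RtoC 0) (map f (seq 0 10)).
Definition nsum10 (f : nat -> nat) : nat :=
  fold_right Nat.add 0%nat (map f (seq 0 10)).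
Definition Rsum10 (f : nat -> R) : R :=
  fold_right Rplus 0 (map f (seq 0 10)).

Definition Mrep (x1 x2 x3 x4 : Z) : C :=
  Cplus (RtoC (IZR x1 + tau * IZR x2))
        (Cmult (RtoC (IZR x3 + tau * IZR x4)) (Cpow xi 4)).

Definition star_rep (x1 x2 x3 x4 : Z) : C :=
  Cplus (RtoC (IZR x1 + tau' * IZR x2))
        (Cmult (RtoC (IZR x3 + tau' * IZR x4)) (Cpow xi 8)).

Definition Mset (z : C) : Prop :=
  exists x1 x2 x3 x4 : Z, z = Mrep x1 x2 x3 x4.

Definition Q2set (n : nat) (z : C) : Prop :=
  exists nj : nat -> nat, (nsum10 nj <= n)%nat /\
    z = Csum10 (fun j => Cmult (RtoC (INR (nj j))) (Cpow xi j)).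

(* D(n) = convex hull of the ten points n xi^j (a compact polygon, hence
   equal to its closure) *)
Definition Dn (n : nat) (z : C) : Prop :=
  exists lam : nat -> R, (forall j, (j < 10)%nat -> 0 <= lam j) /\
    Rsum10 lam = 1 /\
    z = Csum10 (fun j => Cmult (RtoC (lam j)) (Cmult (RtoC (INR n)) (Cpow xi j))).

Definition SigmaSet (W : C -> Prop) (z : C) : Prop :=
  exists x1 x2 x3 x4 : Z, z = Mrep x1 x2 x3 x4 /\ W (star_rep x1 x2 x3 x4).

From Stdlib Require Import Reals Rtrigo_facts List Lra Lia.
From Coquelicot Require Import Coquelicot.
(* Imported after Coquelicot so that [Cpow] is [Defs.Cpow], not Coquelicot's [Complex.Cpow]. *)
From Pilot Require Import Defs.
Open Scope R_scope.

(* The star map is the restriction to M of the Galois automorphism ξ ↦ ξ^7 of Q(ξ):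
   ξ = τ + ξ^4 and ξ^7 = τ' + ξ^8, while ξ ξ^4 = ξ^7 ξ^8 = -1, so multiplication by ξ on M
   corresponds to multiplication by ξ^7 on star images.  Hence (Σ n_j ξ^j)^* = Σ n_j ξ^(7j),
   which is again in Q_2(n) because j ↦ 7j permutes Z/10Z.  Finally Q_2(n) ⊂ D(n): since
   Σ ξ^j = 0, Σ n_j ξ^j = Σ λ_j (n ξ^j) with convex weights λ_j = (n_j + (n - Σ n_k)/10)/n. *)

Lemma tau_sq : tau * tau = tau + 1.
Proof. unfold tau. pose proof (sqrt_sqrt 5 ltac:(lra)). nra. Qed.

Lemma tau'_sq : tau' * tau' = tau' + 1.
Proof. unfold tau'. pose proof (sqrt_sqrt 5 ltac:(lra)). nra. Qed.

Lemma cos_PI5 : cos (PI / 5) = tau / 2.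
Proof.
  set (c := cos (PI / 5)).
  assert (c_pos : 0 < c) by (apply cos_gt_0; pose proof PI_RGT_0; lra).
  (* cos (3 PI/5) = - cos (2 PI/5) makes 4c^3 + 2c^2 - 3c - 1 = (c + 1)(4c^2 - 2c - 1) vanish *)
  assert (triple : cos (2 * (PI / 5) + PI / 5) = - cos (2 * (PI / 5))).
  { replace (2 * (PI / 5) + PI / 5) with (PI - 2 * (PI / 5)) by field.
    apply cos_pi_minus. }
  rewrite cos_plus, sin_2a, cos_2a_cos in triple.
  pose proof (sin2_cos2 (PI / 5)) as pythagoras; unfold Rsqr in pythagoras.
  assert (quadratic : 4 * c * c - 2 * c - 1 = 0) by (fold c in triple, pythagoras; nra).
  pose proof (sqrt_sqrt 5 ltac:(lra)) as sqrt5_sq.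
  assert (sqrt5_gt1 : 1 < sqrt 5) by (pose proof (sqrt_lt_R0 5 ltac:(lra)); nra).
  assert (roots : (4 * c - 1 - sqrt 5) * (4 * c - 1 + sqrt 5) = 0) by nra.
  apply Rmult_integral in roots as [root | root]; unfold tau; nra.
Qed.

Lemma cos_2PI5 : cos (2 * (PI / 5)) = - tau' / 2.
Proof. rewrite cos_2a_cos, cos_PI5. pose proof tau_sq. unfold tau', tau in *. nra. Qed.

Lemma Cpow_add (z : C) (m n : nat) : Cpow z (m + n) = (Cpow z m * Cpow z n)%C.
Proof. induction m as [|m IHm]; cbn [Cpow Nat.add]; [ring | rewrite IHm; ring]. Qed.

Lemma Cpow_xi (k : nat) : Cpow xi k = (cos (INR k * (PI / 5)), sin (INR k * (PI / 5))).
Proof.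
  induction k as [|k IHk].
  - rewrite Rmult_0_l, cos_0, sin_0. reflexivity.
  - cbn [Cpow]. rewrite IHk, S_INR, Rmult_plus_distr_r, Rmult_1_l, cos_plus, sin_plus.
    unfold xi, Cmult; cbn. f_equal; ring.
Qed.

Lemma Cpow_xi_5 : Cpow xi 5 = (- 1)%C.
Proof.
  rewrite Cpow_xi. replace (INR 5 * (PI / 5)) with PI by (simpl; field).
  rewrite cos_PI, sin_PI. unfold Copp, RtoC; cbn. f_equal; ring.
Qed.

Lemma Cpow_xi_mod (k : nat) : Cpow xi k = Cpow xi (k mod 10).
Proof.
  assert (period : forall q r, Cpow xi (10 * q + r) = Cpow xi r).
  { induction q as [|q IHq]; intros r; [reflexivity|].
    replace (10 * S q + r)%nat with (5 + (5 + (10 * q + r)))%nat by lia.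
    rewrite 2!Cpow_add, IHq, Cpow_xi_5. ring. }
  rewrite (Nat.div_mod_eq k 10) at 1. apply period.
Qed.

Lemma xi_decomp : xi = (tau + Cpow xi 4)%C.
Proof.
  rewrite Cpow_xi. replace (INR 4 * (PI / 5)) with (PI - PI / 5) by (simpl; field).
  rewrite cos_pi_minus, sin_PI_x, cos_PI5. unfold xi. rewrite cos_PI5.
  unfold Cplus, RtoC; cbn. f_equal; field.
Qed.

Lemma Cpow_xi_7_decomp : Cpow xi 7 = (tau' + Cpow xi 8)%C.
Proof.
  rewrite !Cpow_xi.
  replace (INR 7 * (PI / 5)) with (2 * (PI / 5) + PI) by (simpl; field).
  replace (INR 8 * (PI / 5)) with ((PI - 2 * (PI / 5)) + PI) by (simpl; field).
  rewrite !neg_cos, !neg_sin, cos_pi_minus, sin_PI_x, cos_2PI5.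
  unfold Cplus, RtoC; cbn. f_equal; field.
Qed.

Definition Zrep (t : R) (v : C) (x1 x2 x3 x4 : Z) : C :=
  (RtoC (IZR x1 + t * IZR x2) + RtoC (IZR x3 + t * IZR x4) * v)%C.

Lemma Mrep_Zrep x1 x2 x3 x4 : Mrep x1 x2 x3 x4 = Zrep tau (Cpow xi 4) x1 x2 x3 x4.
Proof. reflexivity. Qed.

Lemma star_rep_Zrep x1 x2 x3 x4 : star_rep x1 x2 x3 x4 = Zrep tau' (Cpow xi 8) x1 x2 x3 x4.
Proof. reflexivity. Qed.

Ltac push_RtoC :=
  unfold Zrep; rewrite ?minus_IZR, ?plus_IZR, ?mult_IZR;
  repeat (rewrite RtoC_plus || rewrite RtoC_minus || rewrite RtoC_mult).

Lemma Zrep_0 t v : Zrep t v 0 0 0 0 = 0%C.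
Proof. push_RtoC. ring. Qed.

Lemma Zrep_1 t v : Zrep t v 1 0 0 0 = 1%C.
Proof. push_RtoC. ring. Qed.

Lemma Zrep_add t v x1 x2 x3 x4 y1 y2 y3 y4 :
  (Zrep t v x1 x2 x3 x4 + Zrep t v y1 y2 y3 y4)%C
  = Zrep t v (x1 + y1) (x2 + y2) (x3 + y3) (x4 + y4).
Proof. push_RtoC. ring. Qed.

Lemma Zrep_scale t v k x1 x2 x3 x4 :
  (RtoC (IZR k) * Zrep t v x1 x2 x3 x4)%C = Zrep t v (k * x1) (k * x2) (k * x3) (k * x4).
Proof. push_RtoC. ring. Qed.

(* With A = x1 + t x2 and B = x3 + t x4: u (A + B v) = (t A - B) + A v because u v = -1,
   and t A = x2 + t (x1 + x2) because t^2 = t + 1. *)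
Lemma Zrep_mul_unit (t : R) (u v : C) x1 x2 x3 x4 :
  t * t = t + 1 -> u = (t + v)%C -> (u * v)%C = (- 1)%C ->
  (u * Zrep t v x1 x2 x3 x4)%C = Zrep t v (x2 - x3) (x1 + x2 - x4) x1 x2.
Proof.
  intros t_sq -> unit.
  transitivity (Zrep t v (x2 - x3) (x1 + x2 - x4) x1 x2
                + RtoC (IZR x3 + t * IZR x4) * ((t + v) * v + 1)
                + RtoC (IZR x2) * (RtoC (t * t) - RtoC (t + 1)))%C.
  - push_RtoC. ring.
  - rewrite unit, t_sq. ring.
Qed.

(* [star_graph z w] says that z lies in M and w = z^*; as a relation it never needs the
   coordinates of z to be unique. *)
Definition star_graph (z w : C) : Prop :=
  exists x1 x2 x3 x4, z = Mrep x1 x2 x3 x4 /\ w = star_rep x1 x2 x3 x4.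

Lemma star_graph_0 : star_graph 0 0.
Proof. exists 0%Z, 0%Z, 0%Z, 0%Z. now rewrite Mrep_Zrep, star_rep_Zrep, !Zrep_0. Qed.

Lemma star_graph_1 : star_graph 1 1.
Proof. exists 1%Z, 0%Z, 0%Z, 0%Z. now rewrite Mrep_Zrep, star_rep_Zrep, !Zrep_1. Qed.

Lemma star_graph_add z w z' w' :
  star_graph z w -> star_graph z' w' -> star_graph (z + z') (w + w').
Proof.
  intros (x1 & x2 & x3 & x4 & -> & ->) (y1 & y2 & y3 & y4 & -> & ->).
  exists (x1 + y1)%Z, (x2 + y2)%Z, (x3 + y3)%Z, (x4 + y4)%Z.
  now rewrite !Mrep_Zrep, !star_rep_Zrep, !Zrep_add.
Qed.

Lemma star_graph_scale_nat (k : nat) z w :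
  star_graph z w -> star_graph (INR k * z) (INR k * w).
Proof.
  intros (x1 & x2 & x3 & x4 & -> & ->).
  exists (Z.of_nat k * x1)%Z, (Z.of_nat k * x2)%Z, (Z.of_nat k * x3)%Z, (Z.of_nat k * x4)%Z.
  now rewrite INR_IZR_INZ, !Mrep_Zrep, !star_rep_Zrep, !Zrep_scale.
Qed.

Lemma star_graph_mul_xi z w : star_graph z w -> star_graph (xi * z) (Cpow xi 7 * w).
Proof.
  intros (x1 & x2 & x3 & x4 & -> & ->).
  exists (x2 - x3)%Z, (x1 + x2 - x4)%Z, x1, x2.
  rewrite !Mrep_Zrep, !star_rep_Zrep. split; apply Zrep_mul_unit.
  - exact tau_sq.
  - exact xi_decomp.
  - exact Cpow_xi_5.
  - exact tau'_sq.
  - exact Cpow_xi_7_decomp.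
  - rewrite <- Cpow_add, Cpow_xi_mod. exact Cpow_xi_5.
Qed.

Lemma star_graph_Cpow_xi (j : nat) : star_graph (Cpow xi j) (Cpow xi (7 * j mod 10)).
Proof.
  rewrite <- Cpow_xi_mod. induction j as [|j IHj].
  - exact star_graph_1.
  - replace (7 * S j)%nat with (7 + 7 * j)%nat by lia.
    rewrite Cpow_add. exact (star_graph_mul_xi _ _ IHj).
Qed.

Lemma star_graph_Csum10 (f g : nat -> C) :
  (forall j, (j < 10)%nat -> star_graph (f j) (g j)) -> star_graph (Csum10 f) (Csum10 g).
Proof.
  intros fg. unfold Csum10. cbn [seq map fold_right].
  repeat apply star_graph_add; (apply fg; lia) || exact star_graph_0.
Qed.

Lemma Csum10_ext (f g : nat -> C) :
  (forall j, (j < 10)%nat -> f j = g j) -> Csum10 f = Csum10 g.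
Proof. intros fg. unfold Csum10. cbn [seq map fold_right]. rewrite !fg by lia. reflexivity. Qed.

Lemma Csum10_add (f g : nat -> C) :
  Csum10 (fun j => f j + g j)%C = (Csum10 f + Csum10 g)%C.
Proof. unfold Csum10. cbn [seq map fold_right]. ring. Qed.

Lemma Csum10_scale (a : C) (f : nat -> C) :
  Csum10 (fun j => a * f j)%C = (a * Csum10 f)%C.
Proof. unfold Csum10. cbn [seq map fold_right]. ring. Qed.

Lemma Csum10_Cpow_xi : Csum10 (Cpow xi) = 0%C.
Proof.
  transitivity ((1 + Cpow xi 5) * (Cpow xi 0 + Cpow xi 1 + Cpow xi 2 + Cpow xi 3 + Cpow xi 4))%C.
  - unfold Csum10. simpl. ring.
  - rewrite Cpow_xi_5. ring.
Qed.

Lemma Rsum10_INR (f : nat -> nat) : Rsum10 (fun j => INR (f j)) = INR (nsum10 f).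
Proof. unfold Rsum10, nsum10. cbn [seq map fold_right]. rewrite !plus_INR. reflexivity. Qed.

Lemma Q2set_Dn (n : nat) (z : C) : (0 < n)%nat -> Q2set n z -> Dn n z.
Proof.
  intros n_pos (nj & bound & ->).
  assert (n_posR : 0 < INR n) by (apply lt_0_INR; lia).
  assert (boundR : INR (nsum10 nj) <= INR n) by (apply le_INR; lia).
  set (s := (INR n - INR (nsum10 nj)) / 10).
  exists (fun j => (INR (nj j) + s) / INR n). split; [|split].
  - intros j _. apply Rmult_le_pos; [pose proof (pos_INR (nj j)); unfold s; lra|].
    apply Rlt_le, Rinv_0_lt_compat, n_posR.
  - unfold s. rewrite <- Rsum10_INR. unfold Rsum10. cbn [seq map fold_right]. field. lra.
  - transitivity (Csum10 (fun j => INR (nj j) * Cpow xi j + s * Cpow xi j))%C.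
    + rewrite Csum10_add, Csum10_scale, Csum10_Cpow_xi. ring.
    + apply Csum10_ext. intros j _.
      rewrite Cmult_assoc, <- RtoC_mult.
      replace ((INR (nj j) + s) / INR n * INR n) with (INR (nj j) + s) by (field; lra).
      rewrite RtoC_plus. ring.
Qed.

(* j |-> 7 j mod 10 permutes 0..9, with inverse j |-> 3 j mod 10. *)
Lemma Q2set_star_image (n : nat) (nj : nat -> nat) :
  (nsum10 nj <= n)%nat ->
  Q2set n (Csum10 (fun j => INR (nj j) * Cpow xi (7 * j mod 10))%C).
Proof.
  intros bound. exists (fun j => nj (3 * j mod 10)%nat). split.
  - unfold nsum10 in *. cbn [seq map fold_right] in *. simpl Nat.modulo. lia.
  - unfold Csum10. cbn [seq map fold_right]. simpl Nat.modulo. ring.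
Qed.

Theorem lemma6p16 (n : nat) (hn : (0 < n)%nat) (z : C) :
  Q2set n z -> SigmaSet (Dn n) z /\ Dn n z.
Proof.
  intros Q2z. split; [|exact (Q2set_Dn n z hn Q2z)].
  destruct Q2z as (nj & bound & ->).
  assert (graph : star_graph (Csum10 (fun j => INR (nj j) * Cpow xi j)%C)
                             (Csum10 (fun j => INR (nj j) * Cpow xi (7 * j mod 10))%C)).
  { apply star_graph_Csum10. intros j _. apply star_graph_scale_nat, star_graph_Cpow_xi. }
  destruct graph as (x1 & x2 & x3 & x4 & Mz & star_z).
  exists x1, x2, x3, x4. split; [exact Mz|].
  rewrite <- star_z. apply Q2set_Dn, Q2set_star_image; assumption.
Qed.
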